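(* (i) Let $h:\omega\to\omega$ be nondecreasing and let $g(n)=h(2n)$. Then $\mathrm{IOE}(h)\equiv_W\mathrm{IOE}(g)$ and $\mathrm{AED}(h)\equiv_S\mathrm{AED}(g)$. (ii) For all real numbers $a,b>1$, $\mathrm{IOE}(n\mapsto 2^{(a^n)})\equiv_W\mathrm{IOE}(n\mapsto 2^{(b^n)})$ and $\mathrm{AED}(n\mapsto2^{(a^n)})\equiv_S\mathrm{AED}(n\mapsto2^{(b^n)})$.
   Context: A mass problem is a nonempty set of functions $\omega\to\omega$. For mass problems $\mathcal B,\mathcal C$: $\mathcal B\le_S\mathcal C$ if there is a Turing functional $\Phi$ with $\Phi^g\in\mathcal B$ for all $g\in\mathcal C$; $\mathcal B\le_W\mathcal C$ if every $g\in\mathcal C$ Turing computes some $f\in\mathcal B$; $\equiv_S,\equiv_W$ are the induced equivalences. For a function $h$ (with values in $\omega$ or positive reals), $\mathrm{IOE}(h)$ is the set of functions $y:\omega\to\omega$ such that for every computable function $x$ with $x(n)<h(n)$ for all $n$, there are infinitely many $n$ with $x(n)=y(n)$; $\mathrm{AED}(h)$ is the set of functions $y:\omega\to\omega$ with $y(n)<h(n)$ for all $n$ such that for every computable function $x$, $x(n)\ne y(n)$ for all but finitely many $n$. *)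

From Stdlib Require Import Reals List Arith.
Import ListNotations.
Open Scope R_scope.

Inductive code : Type :=
| CZero
| CSucc
| CProj (i : nat)
| COracle
| CComp (f : code) (gs : list code)
| CPrim (f s : code)             (* primitive recursion on first argument *)
| CMu (f : code).                (* unbounded minimisation on first argument *)

Inductive eval (g : nat -> nat) : code -> list nat -> nat -> Prop :=
| ev_zero xs : eval g CZero xs 0
| ev_succ xs : eval g CSucc xs (S (hd 0%nat xs))
| ev_proj i xs : eval g (CProj i) xs (nth i xs 0%nat)
| ev_oracle xs : eval g COracle xs (g (hd 0%nat xs))
| ev_comp f gs xs ys z :
    Forall2 (fun c y => eval g c xs y) gs ys ->
    eval g f ys z -> eval g (CComp f gs) xs z
| ev_prim0 f s xs z : eval g f xs z -> eval g (CPrim f s) (0%nat :: xs) z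
| ev_primS f s n xs r z :
    eval g (CPrim f s) (n :: xs) r ->
    eval g s (n :: r :: xs) z -> eval g (CPrim f s) (S n :: xs) z
| ev_mu f xs n :
    eval g f (n :: xs) 0%nat ->
    (forall m, (m < n)%nat -> exists k, eval g f (m :: xs) (S k)) ->
    eval g (CMu f) xs n.

Definition Tcomputes (g f : nat -> nat) : Prop :=
  exists c : code, forall n, eval g c [n] (f n).

Definition computable (f : nat -> nat) : Prop := Tcomputes (fun _ => 0%nat) f.

Definition mass := (nat -> nat) -> Prop.

Definition S_le (B C : mass) : Prop :=
  exists c : code, forall g, C g -> exists f, B f /\ forall n, eval g c [n] (f n).

Definition W_le (B C : mass) : Prop :=
  forall g, C g -> exists f, B f /\ Tcomputes g f.

Definition S_equiv (B C : mass) : Prop := S_le B C /\ S_le C B.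
Definition W_equiv (B C : mass) : Prop := W_le B C /\ W_le C B.

(* IOE(h), h with positive real values (nat-valued h via INR) *)
Definition IOE (h : nat -> R) : mass := fun y =>
  forall x, computable x -> (forall n, INR (x n) < h n) ->
    forall N, exists n, (N <= n)%nat /\ x n = y n.

Definition AED (h : nat -> R) : mass := fun y =>
  (forall n, INR (y n) < h n) /\
  forall x, computable x -> exists N, forall n, (N <= n)%nat -> x n <> y n.

From Stdlib Require Import Reals Arith Lia List Classical Lra.
Import ListNotations.
Open Scope R_scope.

(* If y meets every computable x < h infinitely often, then so does one of its
   halves n |-> y(2n) or n |-> y(2n+1) for the bound h(2n): otherwise two
   computable witnesses of failure, interleaved, give a computable x < h that y
   meets only finitely often.  Dually, y |-> y o div2 maps AED(h(2n)) into
   AED(h), since a computable x is avoided on the evens and on the odds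
   separately.  Both reductions are reindexings y |-> y o p along a p computable
   without the oracle; such reindexings compose, so iterating compares h with
   n |-> h(2^j n).  Part (ii) follows because a^(2^j n) >= b^n once a^j >= b. *)

Lemma eval_comp1 g f c xs y z :
  eval g c xs y -> eval g f [y] z -> eval g (CComp f [c]) xs z.
Proof. intros Hc Hf; econstructor; [repeat constructor | ]; eassumption. Qed.

Lemma eval_comp2 g f c1 c2 xs y1 y2 z :
  eval g c1 xs y1 -> eval g c2 xs y2 -> eval g f [y1; y2] z ->
  eval g (CComp f [c1; c2]) xs z.
Proof. intros H1 H2 Hf; econstructor; [repeat constructor | ]; eassumption. Qed.

Lemma eval_comp3 g f c1 c2 c3 xs y1 y2 y3 z :
  eval g c1 xs y1 -> eval g c2 xs y2 -> eval g c3 xs y3 ->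
  eval g f [y1; y2; y3] z -> eval g (CComp f [c1; c2; c3]) xs z.
Proof. intros H1 H2 H3 Hf; econstructor; [repeat constructor | ]; eassumption. Qed.

Definition double_code : code := CPrim CZero (CComp CSucc [CComp CSucc [CProj 1]]).
Definition is_zero_code : code := CPrim (CComp CSucc [CZero]) CZero.
Definition parity_code : code := CPrim CZero (CComp is_zero_code [CProj 1]).
Definition add_code : code := CPrim (CProj 0) (CComp CSucc [CProj 1]).
Definition div2_code : code :=
  CPrim CZero (CComp add_code [CProj 1; CComp parity_code [CProj 0]]).
Definition cond_code : code := CPrim (CProj 0) (CProj 3).

Lemma parity_succ n :
  Nat.b2n (Nat.odd (S n)) = match Nat.b2n (Nat.odd n) with O => 1 | S _ => 0 end%nat.
Proof. rewrite Nat.odd_succ, <- Nat.negb_odd; now destruct (Nat.odd n). Qed.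

Lemma even_or_odd_double n : exists k, n = (2 * k)%nat \/ n = S (2 * k).
Proof.
  exists (Nat.div2 n); pose proof (Nat.div2_odd n) as E.
  destruct (Nat.odd n); simpl in E; lia.
Qed.

Lemma odd_succ_double k : Nat.odd (S (2 * k)) = true.
Proof. now rewrite Nat.odd_succ, Nat.even_even. Qed.

Lemma div2_succ n : Nat.div2 (S n) = (Nat.div2 n + Nat.b2n (Nat.odd n))%nat.
Proof.
  destruct (even_or_odd_double n) as [k [-> | ->]].
  - now rewrite Nat.div2_succ_double, Nat.div2_double, Nat.odd_even, Nat.add_0_r.
  - replace (S (S (2 * k))) with (2 * S k)%nat by lia.
    rewrite Nat.div2_double, Nat.div2_succ_double, odd_succ_double; simpl; lia.
Qed.

Lemma eval_double_code g n : eval g double_code [n] (2 * n)%nat.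
Proof.
  induction n as [|n IH]; [repeat constructor |].
  replace (2 * S n)%nat with (S (S (2 * n))) by lia.
  eapply ev_primS; [exact IH |].
  eapply eval_comp1; [eapply eval_comp1 |]; constructor.
Qed.

Lemma eval_is_zero_code g n :
  eval g is_zero_code [n] (match n with O => 1 | S _ => 0 end)%nat.
Proof.
  induction n as [|n IH]; [constructor; eapply eval_comp1; constructor |].
  eapply ev_primS; [exact IH | constructor].
Qed.

Lemma eval_parity_code g n : eval g parity_code [n] (Nat.b2n (Nat.odd n)).
Proof.
  induction n as [|n IH]; [repeat constructor |].
  rewrite parity_succ; eapply ev_primS; [exact IH |].
  eapply eval_comp1; [constructor | apply eval_is_zero_code].
Qed.

Lemma eval_add_code g a b : eval g add_code [a; b] (a + b)%nat.
Proof.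
  induction a as [|a IH]; [repeat constructor |].
  eapply ev_primS; [exact IH |]; eapply eval_comp1; constructor.
Qed.

Lemma eval_div2_code g n : eval g div2_code [n] (Nat.div2 n).
Proof.
  induction n as [|n IH]; [repeat constructor |].
  rewrite div2_succ; eapply ev_primS; [exact IH |].
  eapply eval_comp2; [constructor | | apply eval_add_code].
  eapply eval_comp1; [constructor | apply eval_parity_code].
Qed.

Lemma eval_cond_code g p a b :
  eval g cond_code [p; a; b] (match p with O => a | S _ => b end).
Proof.
  induction p as [|p IH]; [repeat constructor |].
  eapply ev_primS; [exact IH | constructor].
Qed.

Definition uniformly_computable (p : nat -> nat) : Prop :=
  exists c : code, forall g n, eval g c [n] (p n).

Lemma uniformly_computable_id : uniformly_computable (fun n => n).
Proof. exists (CProj 0); constructor. Qed.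

Lemma uniformly_computable_comp p q :
  uniformly_computable p -> uniformly_computable q ->
  uniformly_computable (fun n => q (p n)).
Proof.
  intros [cp Hp] [cq Hq]; exists (CComp cq [cp]); intros g n.
  eapply eval_comp1; [apply Hp | apply Hq].
Qed.

Lemma uniformly_computable_double : uniformly_computable (fun n => 2 * n)%nat.
Proof. exists double_code; apply eval_double_code. Qed.

Lemma uniformly_computable_succ_double : uniformly_computable (fun n => S (2 * n)).
Proof.
  apply (uniformly_computable_comp _ S uniformly_computable_double).
  exists CSucc; constructor.
Qed.

Lemma uniformly_computable_parity : uniformly_computable (fun n => Nat.b2n (Nat.odd n)).
Proof. exists parity_code; apply eval_parity_code. Qed.

Lemma uniformly_computable_div2 : uniformly_computable Nat.div2.
Proof. exists div2_code; apply eval_div2_code. Qed.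

Lemma Tcomputes_uniformly_computable g p : uniformly_computable p -> Tcomputes g p.
Proof. intros [c Hc]; exists c; apply Hc. Qed.

Lemma Tcomputes_comp g f p :
  Tcomputes g f -> uniformly_computable p -> Tcomputes g (fun n => f (p n)).
Proof.
  intros [cf Hf] [cp Hp]; exists (CComp cf [cp]); intro n.
  eapply eval_comp1; [apply Hp | apply Hf].
Qed.

Lemma Tcomputes_cond g p a b :
  Tcomputes g p -> Tcomputes g a -> Tcomputes g b ->
  Tcomputes g (fun n => match p n with O => a n | S _ => b n end).
Proof.
  intros [cp Hp] [ca Ha] [cb Hb]; exists (CComp cond_code [cp; ca; cb]); intro n.
  eapply eval_comp3; [apply Hp | apply Ha | apply Hb | apply eval_cond_code].
Qed.

Definition interleave (x1 x2 : nat -> nat) (m : nat) : nat :=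
  if Nat.odd m then x2 (Nat.div2 m) else x1 (Nat.div2 m).

Lemma interleave_double x1 x2 k : interleave x1 x2 (2 * k) = x1 k.
Proof. unfold interleave; now rewrite Nat.odd_even, Nat.div2_double. Qed.

Lemma interleave_succ_double x1 x2 k : interleave x1 x2 (S (2 * k)) = x2 k.
Proof. unfold interleave; now rewrite odd_succ_double, Nat.div2_succ_double. Qed.

Lemma computable_interleave x1 x2 :
  computable x1 -> computable x2 -> computable (interleave x1 x2).
Proof.
  intros H1 H2.
  assert (Hcond := Tcomputes_cond _ _ _ _
    (Tcomputes_uniformly_computable _ _ uniformly_computable_parity)
    (Tcomputes_comp _ _ _ H1 uniformly_computable_div2)
    (Tcomputes_comp _ _ _ H2 uniformly_computable_div2)).
  destruct Hcond as [c Hc]; exists c; intro m.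
  specialize (Hc m); unfold interleave; destruct (Nat.odd m); exact Hc.
Qed.

Definition nondecreasing (h : nat -> R) : Prop :=
  forall m n, (m <= n)%nat -> h m <= h n.

Lemma nondecreasing_dilate h k :
  nondecreasing h -> nondecreasing (fun n => h (k * n)%nat).
Proof. intros Hh m n Hmn; apply Hh, Nat.mul_le_mono_l, Hmn. Qed.

Lemma IOE_antimono (h1 h2 : nat -> R) :
  (forall n, h1 n <= h2 n) -> forall y, IOE h2 y -> IOE h1 y.
Proof.
  intros Hle y Hy x Hx Hb; apply Hy; [exact Hx |].
  intro n; eapply Rlt_le_trans; [apply Hb | apply Hle].
Qed.

Lemma AED_mono (h1 h2 : nat -> R) :
  (forall n, h1 n <= h2 n) -> forall y, AED h1 y -> AED h2 y.
Proof.
  intros Hle y [Hb Hy]; split; [| exact Hy].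
  intro n; eapply Rlt_le_trans; [apply Hb | apply Hle].
Qed.

Lemma not_IOE h y : ~ IOE h y ->
  exists x, computable x /\ (forall n, INR (x n) < h n) /\
            exists N, forall n, (N <= n)%nat -> x n <> y n.
Proof.
  intro Hy; apply NNPP; intro Hno; apply Hy; intros x Hx Hb N.
  apply NNPP; intro HN; apply Hno; exists x; repeat split; [exact Hx | exact Hb |].
  exists N; intros n Hn Exy; apply HN; now exists n.
Qed.

Lemma IOE_even_or_odd_part h y : nondecreasing h -> IOE h y ->
  IOE (fun n => h (2 * n)%nat) (fun n => y (2 * n)%nat) \/
  IOE (fun n => h (2 * n)%nat) (fun n => y (S (2 * n))).
Proof.
  intros Hh Hy.
  destruct (classic (IOE (fun n => h (2 * n)%nat) (fun n => y (2 * n)%nat))) as [He|He];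
    [now left |].
  destruct (classic (IOE (fun n => h (2 * n)%nat) (fun n => y (S (2 * n))))) as [Ho|Ho];
    [now right | exfalso].
  destruct (not_IOE _ _ He) as (x1 & Hx1 & Hb1 & N1 & HN1).
  destruct (not_IOE _ _ Ho) as (x2 & Hx2 & Hb2 & N2 & HN2).
  assert (Hb : forall m, INR (interleave x1 x2 m) < h m).
  { intro m; destruct (even_or_odd_double m) as [k [-> | ->]].
    - rewrite interleave_double; apply Hb1.
    - rewrite interleave_succ_double.
      eapply Rlt_le_trans; [apply Hb2 | apply Hh; lia]. }
  destruct (Hy _ (computable_interleave _ _ Hx1 Hx2) Hb (2 * (N1 + N2))%nat)
    as (m & Hm & Exy).
  destruct (even_or_odd_double m) as [k [-> | ->]].
  - rewrite interleave_double in Exy; apply (HN1 k); [lia | exact Exy].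
  - rewrite interleave_succ_double in Exy; apply (HN2 k); [lia | exact Exy].
Qed.

Lemma AED_comp_div2 h y : nondecreasing h ->
  AED (fun n => h (2 * n)%nat) y -> AED h (fun m => y (Nat.div2 m)).
Proof.
  intros Hh [Hb Hy]; split.
  - intro m; destruct (even_or_odd_double m) as [k [-> | ->]].
    + rewrite Nat.div2_double; apply Hb.
    + rewrite Nat.div2_succ_double.
      eapply Rlt_le_trans; [apply Hb | apply Hh; lia].
  - intros x Hx.
    destruct (Hy (fun k => x (2 * k)%nat)) as [N1 HN1].
    { exact (Tcomputes_comp _ _ _ Hx uniformly_computable_double). }
    destruct (Hy (fun k => x (S (2 * k)))) as [N2 HN2].
    { exact (Tcomputes_comp _ _ _ Hx uniformly_computable_succ_double). }
    exists (2 * (N1 + N2))%nat; intros m Hm.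
    destruct (even_or_odd_double m) as [k [-> | ->]].
    + rewrite Nat.div2_double; apply HN1; lia.
    + rewrite Nat.div2_succ_double; apply HN2; lia.
Qed.

Definition W_reindex (B C : mass) : Prop :=
  forall y, C y -> exists p, uniformly_computable p /\ B (fun n => y (p n)).

Definition S_reindex (B C : mass) : Prop :=
  exists p, uniformly_computable p /\ forall y, C y -> B (fun n => y (p n)).

Lemma W_le_of_reindex B C : W_reindex B C -> W_le B C.
Proof.
  intros HBC y Hy; destruct (HBC y Hy) as (p & Hp & HB).
  exists (fun n => y (p n)); split; [exact HB |].
  apply Tcomputes_comp; [exists COracle; constructor | exact Hp].
Qed.

Lemma S_le_of_reindex B C : S_reindex B C -> S_le B C.
Proof.
  intros (p & [c Hc] & HBC); exists (CComp COracle [c]); intros y Hy.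
  exists (fun n => y (p n)); split; [now apply HBC |].
  intro n; eapply eval_comp1; [apply Hc | constructor].
Qed.

Lemma W_reindex_incl (B C : mass) : (forall y, C y -> B y) -> W_reindex B C.
Proof. intros HCB y Hy; exists (fun n => n); split; [exact uniformly_computable_id | now apply HCB]. Qed.

Lemma S_reindex_incl (B C : mass) : (forall y, C y -> B y) -> S_reindex B C.
Proof. intro HCB; exists (fun n => n); split; [exact uniformly_computable_id | exact HCB]. Qed.

Lemma W_reindex_trans A B C : W_reindex A B -> W_reindex B C -> W_reindex A C.
Proof.
  intros HAB HBC y Hy.
  destruct (HBC y Hy) as (p & Hp & HB); destruct (HAB _ HB) as (q & Hq & HA).
  exists (fun n => p (q n)); split; [now apply uniformly_computable_comp | exact HA].
Qed.

Lemma S_reindex_trans A B C : S_reindex A B -> S_reindex B C -> S_reindex A C.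
Proof.
  intros (q & Hq & HAB) (p & Hp & HBC).
  exists (fun n => p (q n)); split; [now apply uniformly_computable_comp |].
  intros y Hy; exact (HAB _ (HBC y Hy)).
Qed.

Lemma W_reindex_IOE_double h :
  nondecreasing h -> W_reindex (IOE (fun n => h (2 * n)%nat)) (IOE h).
Proof.
  intros Hh y Hy; destruct (IOE_even_or_odd_part h y Hh Hy) as [He | Ho].
  - exists (fun n => 2 * n)%nat; split; [exact uniformly_computable_double | exact He].
  - exists (fun n => S (2 * n)); split; [exact uniformly_computable_succ_double | exact Ho].
Qed.

Lemma S_reindex_AED_double h :
  nondecreasing h -> S_reindex (AED h) (AED (fun n => h (2 * n)%nat)).
Proof.
  intro Hh; exists Nat.div2; split; [exact uniformly_computable_div2 |].
  intros y; exact (AED_comp_div2 h y Hh).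
Qed.

Lemma pow2_dilate_succ (h : nat -> R) j n :
  h (2 ^ S j * n)%nat <= h (2 ^ j * (2 * n))%nat.
Proof. right; f_equal; rewrite Nat.pow_succ_r'; lia. Qed.

Lemma W_reindex_IOE_dilate h j :
  nondecreasing h -> W_reindex (IOE (fun n => h (2 ^ j * n)%nat)) (IOE h).
Proof.
  intro Hh; induction j as [|j IH].
  - apply W_reindex_incl, IOE_antimono; intro n; right; f_equal; simpl; lia.
  - eapply W_reindex_trans; [| exact IH].
    eapply W_reindex_trans;
      [| exact (W_reindex_IOE_double _ (nondecreasing_dilate h _ Hh))].
    apply W_reindex_incl, IOE_antimono, pow2_dilate_succ.
Qed.

Lemma S_reindex_AED_dilate h j :
  nondecreasing h -> S_reindex (AED h) (AED (fun n => h (2 ^ j * n)%nat)).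
Proof.
  intro Hh; induction j as [|j IH].
  - apply S_reindex_incl, AED_mono; intro n; right; f_equal; simpl; lia.
  - eapply S_reindex_trans; [exact IH |].
    eapply S_reindex_trans;
      [exact (S_reindex_AED_double _ (nondecreasing_dilate h _ Hh)) |].
    apply S_reindex_incl, AED_mono, pow2_dilate_succ.
Qed.

Lemma W_le_IOE_of_dilation (A B : nat -> R) j : nondecreasing B ->
  (forall n, A n <= B (2 ^ j * n)%nat) -> W_le (IOE A) (IOE B).
Proof.
  intros HB HAB; apply W_le_of_reindex.
  eapply W_reindex_trans; [| exact (W_reindex_IOE_dilate B j HB)].
  apply W_reindex_incl, IOE_antimono, HAB.
Qed.

Lemma S_le_AED_of_dilation (A B : nat -> R) j : nondecreasing A ->
  (forall n, B n <= A (2 ^ j * n)%nat) -> S_le (AED A) (AED B).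
Proof.
  intros HA HBA; apply S_le_of_reindex.
  eapply S_reindex_trans; [exact (S_reindex_AED_dilate A j HA) |].
  apply S_reindex_incl, AED_mono, HBA.
Qed.

Lemma nondecreasing_Rpower_pow c : 1 <= c -> nondecreasing (fun n => Rpower 2 (c ^ n)).
Proof. intros Hc m n Hmn; apply Rle_Rpower; [lra | now apply Rle_pow]. Qed.

Lemma Rpower_pow_dilation a b : 1 < a ->
  exists j, forall n, Rpower 2 (b ^ n) <= Rpower 2 (a ^ (2 ^ j * n)%nat).
Proof.
  intro Ha.
  destruct (Pow_x_infinity a ltac:(rewrite Rabs_right; lra) (Rabs b)) as [j Hj].
  exists j; intro n; apply Rle_Rpower; [lra |].
  assert (Haj : Rabs b <= a ^ j).
  { specialize (Hj j (le_n j)).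
    rewrite Rabs_right in Hj; [lra | apply Rle_ge, pow_le; lra]. }
  rewrite pow_mult.
  apply (Rle_trans _ (Rabs b ^ n)); [rewrite RPow_abs; apply RRle_abs |].
  apply pow_incr; split; [apply Rabs_pos |].
  apply (Rle_trans _ _ _ Haj), Rle_pow; [lra | apply Nat.lt_le_incl, Nat.pow_gt_lin_r; lia].
Qed.

Theorem mainTheorem4 :
  (forall h : nat -> nat,
     (forall m n : nat, (m <= n)%nat -> (h m <= h n)%nat) ->
     W_equiv (IOE (fun n => INR (h n))) (IOE (fun n => INR (h (2 * n)%nat))) /\
     S_equiv (AED (fun n => INR (h n))) (AED (fun n => INR (h (2 * n)%nat)))) /\
  (forall a b : R, 1 < a -> 1 < b ->
     W_equiv (IOE (fun n => Rpower 2 (a ^ n))) (IOE (fun n => Rpower 2 (b ^ n))) /\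
     S_equiv (AED (fun n => Rpower 2 (a ^ n))) (AED (fun n => Rpower 2 (b ^ n)))).
Proof.
  split.
  - intros h Hh.
    assert (Hmono : nondecreasing (fun n => INR (h n)))
      by (intros m n Hmn; apply le_INR, Hh, Hmn).
    pose proof (nondecreasing_dilate _ 2 Hmono) as Hmono2.
    split; split.
    + apply (W_le_IOE_of_dilation _ _ 0); [exact Hmono2 | intro n; apply le_INR, Hh; simpl; lia].
    + apply (W_le_IOE_of_dilation _ _ 1); [exact Hmono | intro n; apply le_INR, Hh; simpl; lia].
    + apply (S_le_AED_of_dilation _ _ 1); [exact Hmono | intro n; apply le_INR, Hh; simpl; lia].
    + apply (S_le_AED_of_dilation _ _ 0); [exact Hmono2 | intro n; apply le_INR, Hh; simpl; lia].
  - intros a b Ha Hb.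
    destruct (Rpower_pow_dilation a b Ha) as [i Hab].
    destruct (Rpower_pow_dilation b a Hb) as [j Hba].
    split; split.
    + apply (W_le_IOE_of_dilation _ _ j); [apply nondecreasing_Rpower_pow; lra | exact Hba].
    + apply (W_le_IOE_of_dilation _ _ i); [apply nondecreasing_Rpower_pow; lra | exact Hab].
    + apply (S_le_AED_of_dilation _ _ i); [apply nondecreasing_Rpower_pow; lra | exact Hab].
    + apply (S_le_AED_of_dilation _ _ j); [apply nondecreasing_Rpower_pow; lra | exact Hba].
Qed.
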